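(* For every $n\ge1$, $\mathbf{ML}_n$ is structurally complete: for any formulas $\varphi,\psi$, if for every substitution $\sigma$ (a map from propositional variables to formulas, extended homomorphically to all formulas), $\sigma(\varphi)\in\mathbf{ML}_n$ implies $\sigma(\psi)\in\mathbf{ML}_n$, then $\varphi\to\psi\in\mathbf{ML}_n$.
   Context: Formulas are built from a countably infinite set of propositional variables and $\bot$ using $\land,\lor,\to$; $\neg\alpha:=\alpha\to\bot$; intuitionistic Kripke semantics with valuations assigning upward-closed sets. For $n\ge1$, $\mathfrak{F}_n=\langle\wp^*(n),\supseteq\rangle$, where $n=\{0,\dots,n-1\}$ and $\wp^*(n)$ is the set of non-empty subsets of $n$; its root is $n$. $\mathbf{ML}_n$ is the set of formulas $\varphi$ with $\mathfrak{F}_n,V,n\vDash\varphi$ for every valuation $V$. *)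

From mathcomp Require Import all_boot.
Set Implicit Arguments. Unset Strict Implicit. Unset Printing Implicit Defensive.

Inductive form : Type :=
| Var : nat -> form
| Bot : form
| And : form -> form -> form
| Or  : form -> form -> form
| Imp : form -> form -> form.

Definition Neg (a : form) : form := Imp a Bot.

Fixpoint subst (s : nat -> form) (a : form) : form :=
  match a with
  | Var p => s p
  | Bot => Bot
  | And a b => And (subst s a) (subst s b)
  | Or a b => Or (subst s a) (subst s b)
  | Imp a b => Imp (subst s a) (subst s b)
  end.

(* The Medvedev frame F_n: worlds are nonempty subsets of 'I_n = {0,...,n-1},
   accessibility w R v iff w ⊇ v (i.e. v \subset w). *)
Definition world (n : nat) (w : {set 'I_n}) : Prop := w != set0.

(* A valuation assigns to each variable an upward-closed set of worlds
   (upward along R, i.e. downward along inclusion). *)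
Definition upclosed (n : nat) (V : nat -> {set 'I_n} -> Prop) : Prop :=
  forall p (w v : {set 'I_n}), world w -> world v -> v \subset w -> V p w -> V p v.

Fixpoint forces (n : nat) (V : nat -> {set 'I_n} -> Prop) (w : {set 'I_n})
  (a : form) : Prop :=
  match a with
  | Var p => V p w
  | Bot => False
  | And a b => forces V w a /\ forces V w b
  | Or a b => forces V w a \/ forces V w b
  | Imp a b => forall v : {set 'I_n}, world v -> v \subset w ->
                 forces V v a -> forces V v b
  end.

Definition ML (n : nat) (a : form) : Prop :=
  forall V : nat -> {set 'I_n} -> Prop, upclosed V -> forces V [set: 'I_n] a.

From mathcomp Require Import all_boot.
From Stdlib Require Import ClassicalEpsilon.
Set Implicit Arguments. Unset Strict Implicit.

(* Fix a world w of F_n with forces V w phi.  Every point i of F_n is sent into w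
   by reading off which of the variables p_0, ..., p_(n-1) hold at the maximal
   world [set i]; the induced map x |-> g @: x is a p-morphism from F_n onto the
   worlds below w.  Because the map only depends on the variables at maximal
   worlds, the valuation V can be pulled back along it by a substitution sigma:
   forces U x (sigma a) <-> forces V (g @: x) a for every valuation U.  Hence
   sigma phi lies in ML_n, so does sigma psi, and evaluating sigma psi under the
   valuation making p_i true exactly below [set i] (for which g @: [set: 'I_n] = w)
   gives forces V w psi. *)

Definition classic_bool (P : Prop) : bool :=
  if excluded_middle_informative P then true else false.

Lemma classic_boolP (P : Prop) : reflect P (classic_bool P).
Proof. by rewrite /classic_bool; case: excluded_middle_informative; constructor. Qed.

Definition Top : form := Imp Bot Bot.
Definition bigOr (l : seq form) : form := foldr Or Bot l.
Definition bigAnd (l : seq form) : form := foldr And Top l.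

Section Forcing.
Variables (n : nat) (U : nat -> {set 'I_n} -> Prop).

Lemma forces_bigOr x (T : eqType) (f : T -> form) (s : seq T) :
  forces U x (bigOr (map f s)) <-> exists2 y, y \in s & forces U x (f y).
Proof.
elim: s => [|a s IH] /=; first by split=> // -[].
split.
- case=> [Ha|/IH [y sy Hy]]; first by exists a; rewrite ?mem_head.
  by exists y; rewrite // in_cons sy orbT.
- case=> y; rewrite in_cons => /orP [/eqP-> | sy] Hy; first by left.
  by right; apply/IH; exists y.
Qed.

Lemma forces_bigAnd x (T : eqType) (f : T -> form) (s : seq T) :
  forces U x (bigAnd (map f s)) <-> forall y, y \in s -> forces U x (f y).
Proof.
elim: s => [|a s IH] /=; first by split=> // _ v _ _.
split.
- by case=> Ha /IH Hs y; rewrite in_cons => /orP [/eqP-> | /Hs].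
- move=> H; split; first by apply: H; rewrite mem_head.
  by apply/IH => y sy; apply: H; rewrite in_cons sy orbT.
Qed.

Lemma forces_persist : upclosed U ->
  forall a w v, world w -> world v -> v \subset w -> forces U w a -> forces U v a.
Proof.
move=> HU; elim=> [p||a IHa b IHb|a IHa b IHb|a IHa b IHb] w v Hw Hv vw /=.
- exact: HU.
- by [].
- by case=> ? ?; split; [apply: (IHa w) | apply: (IHb w)].
- by case=> ?; [left; apply: (IHa w) | right; apply: (IHb w)].
- by move=> H u Hu uv; apply: H => //; apply: subset_trans uv vw.
Qed.

End Forcing.

Lemma world_set1 n (i : 'I_n) : world [set i].
Proof. by apply/set0Pn; exists i; rewrite set11. Qed.

Lemma world_sub_set1 n (v : {set 'I_n}) i : world v -> v \subset [set i] -> v = [set i].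
Proof. by rewrite /world => /negbTE v0; rewrite subset1 v0 orbF => /eqP. Qed.

Lemma world_imset n m (f : 'I_n -> 'I_m) (x : {set 'I_n}) : world x -> world (f @: x).
Proof. by rewrite /world imset_eq0. Qed.

Lemma imset_preimI (T T' : finType) (f : T -> T') (A : {set T}) (B : {set T'}) :
  B \subset f @: A -> f @: (A :&: f @^-1: B) = B.
Proof.
move=> BfA; apply/eqP; rewrite eqEsubset; apply/andP; split.
  by apply/subsetP => j /imsetP [i]; rewrite !inE => /andP [_ Bfi] ->.
apply/subsetP => j Bj; have /imsetP [i Ai ji] := subsetP BfA j Bj.
by apply/imsetP; exists i; rewrite // !inE Ai -ji Bj.
Qed.

(* x |-> f @: x is a p-morphism from F_n to F_m; [imset_preimI] is its back condition. *)
Section PMorphism.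
Variables (n m : nat) (f : 'I_n -> 'I_m).
Variables (U : nat -> {set 'I_n} -> Prop) (V : nat -> {set 'I_m} -> Prop).
Variable s : nat -> form.
Hypothesis forces_s : forall p x, world x -> (forces U x (s p) <-> V p (f @: x)).

Lemma forces_subst a x : world x -> (forces U x (subst s a) <-> forces V (f @: x) a).
Proof.
elim: a x => [p||a IHa b IHb|a IHa b IHb|a IHa b IHb] x Hx /=.
- exact: forces_s.
- by [].
- by rewrite IHa ?IHb.
- by rewrite IHa ?IHb.
split=> [H y Hy yfx | H v Hv vx].
- have fy' := imset_preimI yfx; set y' := _ :&: _ in fy'.
  have Hy' : world y' by move: Hy; rewrite /world -fy' imset_eq0.
  by rewrite -fy' -IHa // -IHb //; apply: H; rewrite // subsetIl.
- by rewrite IHa // IHb //; apply: H; [apply: world_imset | apply: imsetS].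
Qed.

End PMorphism.

(* Formulas distinguish all records of p_0, ..., p_(n-1) at the maximal worlds
   [set i]; this is what makes the valuation V on F_m definable after pulling
   back along the point map. *)
Section PullbackSubstitution.
Variables (n m : nat) (sel : {ffun 'I_n -> bool} -> 'I_m).

Definition var_record (U : nat -> {set 'I_n} -> Prop) (i : 'I_n) : {ffun 'I_n -> bool} :=
  [ffun j : 'I_n => classic_bool (U j [set i])].

Definition point_map U (i : 'I_n) : 'I_m := sel (var_record U i).

Definition record_form (b : {ffun 'I_n -> bool}) : form :=
  bigAnd (map (fun j : 'I_n => if b j then Var j else Neg (Var j)) (enum 'I_n)).

Definition fiber_form (z : {set 'I_m}) : form :=
  bigOr (map record_form [seq b <- enum {ffun 'I_n -> bool} | sel b \in z]).

Definition pullback_subst (V : nat -> {set 'I_m} -> Prop) (p : nat) : form :=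
  bigOr (map (fun z => Neg (Neg (fiber_form z)))
    [seq z <- enum {set 'I_m} | (z != set0) && classic_bool (V p z)]).

Variable U : nat -> {set 'I_n} -> Prop.

Lemma forces_set1_neg i (p : nat) : forces U [set i] (Neg (Var p)) <-> ~ U p [set i].
Proof.
split=> /= [H /(H _ (world_set1 i) (subxx _)) // | H v Hv /(world_sub_set1 Hv) -> //].
Qed.

Lemma forces_set1_record i b : forces U [set i] (record_form b) <-> b = var_record U i.
Proof.
rewrite forces_bigAnd; split=> [H | -> j _].
- apply/ffunP => j; rewrite ffunE; have := H j (mem_enum _ j).
  by case: (b j) => /= [? | /forces_set1_neg ?]; case: classic_boolP.
- by rewrite ffunE; case: classic_boolP => [// | /forces_set1_neg].
Qed.

Lemma forces_set1_fiber i z : forces U [set i] (fiber_form z) <-> point_map U i \in z.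
Proof.
rewrite forces_bigOr; split=> [[b] | zi].
- by rewrite mem_filter => /andP [zb _] /forces_set1_record bU; rewrite /point_map -bU.
- exists (var_record U i); last exact/forces_set1_record.
  by rewrite mem_filter zi mem_enum.
Qed.

(* Every world contains a maximal world [set i], which is where [fiber_form z] is
   decided; the double negation makes the condition hold throughout x. *)
Lemma forces_notnot_fiber x z : world x ->
  forces U x (Neg (Neg (fiber_form z))) <-> point_map U @: x \subset z.
Proof.
move=> Hx; split=> [H | xz v /set0Pn [i vi] vx Hn].
- apply/subsetP => j /imsetP [i xi ->]; apply/negPn/negP => zi.
  apply: (H [set i] (world_set1 i)); first by rewrite sub1set.
  by move=> v Hv /(world_sub_set1 Hv) -> /forces_set1_fiber; rewrite (negbTE zi).
- apply: (Hn [set i] (world_set1 i)); rewrite ?sub1set //.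
  by apply/forces_set1_fiber/(subsetP xz)/imset_f/(subsetP vx).
Qed.

Lemma forces_pullback_var V p x : upclosed V -> world x ->
  forces U x (pullback_subst V p) <-> V p (point_map U @: x).
Proof.
move=> HV Hx; rewrite forces_bigOr; split=> [[z] | Vpx].
- rewrite mem_filter => /andP [/andP [Hz /classic_boolP Vpz] _] /forces_notnot_fiber.
  by move=> /(_ Hx) xz; apply: (HV p z) => //; apply: world_imset.
- exists (point_map U @: x); last exact/forces_notnot_fiber.
  by rewrite mem_filter mem_enum andbT world_imset //; apply/classic_boolP.
Qed.

Lemma forces_pullback V a x : upclosed V -> world x ->
  forces U x (subst (pullback_subst V) a) <-> forces V (point_map U @: x) a.
Proof. by move=> HV; apply: forces_subst => p y; apply: forces_pullback_var. Qed.

End PullbackSubstitution.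

Definition below_set1_val n : nat -> {set 'I_n} -> Prop :=
  fun p v => exists2 i : 'I_n, p = i & v \subset [set i].

Arguments below_set1_val : clear implicits.

Lemma upclosed_below_set1_val n : upclosed (below_set1_val n).
Proof. by move=> p w v _ _ vw [i -> wi]; exists i => //; apply: subset_trans vw wi. Qed.

Lemma var_record_below_set1_val n (i : 'I_n) :
  var_record (below_set1_val n) i = [ffun j => j == i].
Proof.
apply/ffunP => j; rewrite !ffunE; apply/classic_boolP/eqP => [[k jk] | ->].
  by rewrite sub1set inE => /eqP ik; apply: val_inj; rewrite /= jk ik.
by exists i.
Qed.

Definition pick_in n (w : {set 'I_n}) (d : 'I_n) (b : {ffun 'I_n -> bool}) : 'I_n :=
  if [pick j in w | b j] is Some j then j else d.

Lemma pick_in_mem n (w : {set 'I_n}) d b : d \in w -> pick_in w d b \in w.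
Proof. by rewrite /pick_in; case: pickP => [j /andP []|]. Qed.

Lemma pick_in_set1 n (w : {set 'I_n}) d i : i \in w -> pick_in w d [ffun j => j == i] = i.
Proof.
move=> wi; rewrite /pick_in; case: pickP => [j | /(_ i)]; rewrite !ffunE.
  by case/andP => _ /eqP.
by rewrite wi eqxx.
Qed.

Theorem mainTheorem12 (n : nat) : 1 <= n ->
  forall phi psi : form,
    (forall s : nat -> form, ML n (subst s phi) -> ML n (subst s psi)) ->
    ML n (Imp phi psi).
Proof.
move=> _ phi psi Hrule V HV w Hw _ Hphi.
have [d wd] := set0Pn _ Hw.
have Hroot : world [set: 'I_n] by apply/set0Pn; exists d.
pose g U := point_map (pick_in w d) U.
have g_sub U : g U @: [set: 'I_n] \subset w.
  by apply/subsetP => j /imsetP [i _ ->]; apply: pick_in_mem.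
have g_below : g (below_set1_val n) @: [set: 'I_n] = w.
  apply/eqP; rewrite eqEsubset g_sub; apply/subsetP => i wi.
  by apply/imsetP; exists i; rewrite // /g /point_map var_record_below_set1_val pick_in_set1.
have Hsphi : ML n (subst (pullback_subst (pick_in w d) V) phi).
  move=> U _; apply/forces_pullback => //.
  exact: (forces_persist HV Hw (world_imset _ Hroot) (g_sub U)).
have := Hrule _ Hsphi _ (@upclosed_below_set1_val n).
by rewrite forces_pullback // g_below.
Qed.
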